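(* Assume all jobs have the same processing time, i.e. $p_j=1$ for all $j\in[n]$. Run IPR with $\rho=2$, and for each iteration $i$ of the while loop let $b^{(i)}_{\min}$ be the minimum of $p(B)$ over all bags in the tentative assignment at the start of iteration $i$. Then at each iteration $i$ (such that iteration $i+1$ is executed), $b^{(i+1)}_{\min}\ge b^{(i)}_{\min}$.
   Context: Jobs $j\in[n]$ have processing times $p_j\ge0$; for a bag $B$, $p(B)=\sum_{j\in B}p_j$. There are $m$ machines with predicted speeds $\hat s_1\ge\dots\ge\hat s_m$; $opt(\mathbf p,\hat{\mathbf s})$ is the minimum makespan $\max_i(\text{load of } i)/\hat s_i$ of assigning jobs to machines with speeds $\hat{\mathbf s}$. Algorithm IPR. Input: $\hat{\mathbf s}$, $\mathbf p$, $\alpha\in(0,1)$, accuracy $\epsilon\in(0,1)$, $\rho\ge1$. (1) Compute a partition $B_1,\dots,B_m$ with $p(B_1)\ge\dots\ge p(B_m)$ such that putting $B_i$ on machine $i$ has makespan at most $(1+\epsilon)opt(\mathbf p,\hat{\mathbf s})$ under speeds $\hat{\mathbf s}$. (2) Set $\overline{OPT}_C=\max_i p(B_i)/\hat s_i$ and tentative assignment $\mathcal M_i=\{B_i\}$. (3) While $\max\{p(B): B\in\cup_i\mathcal M_i, |B|\ge2\}>\rho\min\{p(B):B\in\cup_i\mathcal M_i\}$ (each execution of the loop body is an iteration): compute $\mathcal M'=$ LPT-Rebalance$(\mathcal M)$; if $\max_i\sum_{B\in\mathcal M'_i}p(B)/\hat s_i>(1+\alpha)\overline{OPT}_C$ return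 the current bags $\cup_i\mathcal M_i$; else $\mathcal M\leftarrow\mathcal M'$. (4) Return the bags $\cup_i\mathcal M_i$. LPT-Rebalance: let $B_{\min}$ be a bag of minimum $p(B)$ over all bags, $\mathcal M_{\min}$ its collection, $\mathcal M_{\max}$ a collection containing a bag of maximum $p(B)$ among bags with at least two jobs. Move $B_{\min}$ into $\mathcal M_{\max}$, let $\ell=|\mathcal M_{\max}|$, pool its jobs and redistribute them into $\ell$ new bags by LPT (jobs in non-increasing processing time, each into a currently least-loaded bag); these form the new $\mathcal M_{\max}$. *)

From HB Require Import structures.
From mathcomp Require Import all_boot all_order all_algebra.
Set Implicit Arguments. Unset Strict Implicit. Unset Printing Implicit Defensive.
Import Order.TTheory GRing.Theory Num.Theory.
Local Open Scope ring_scope.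

Section IPR.
Variables (R : realFieldType) (n m : nat).
Variable p : 'I_n -> R.
Variable s : 'I_m -> R.

Definition pB (B : {set 'I_n}) : R := \sum_(j in B) p j.

Definition assign_makespan (f : {ffun 'I_n -> 'I_m}) : R :=
  \big[Num.max/0]_(i : 'I_m) ((\sum_(j | f j == i) p j) / s i).

(* a tentative assignment: machine i holds a collection (list) of bags *)
Definition state := 'I_m -> seq {set 'I_n}.

Definition bags (M : state) : seq {set 'I_n} :=
  flatten [seq M i | i <- enum 'I_m].

Definition load (M : state) (i : 'I_m) : R := \sum_(B <- M i) pB B.

Definition state_makespan (M : state) : R :=
  \big[Num.max/0]_(i : 'I_m) (load M i / s i).

(* min { p(B) : B a bag of M } (0 if there is no bag) *)
Definition bmin (M : state) : R :=
  \big[Num.min/ pB (head set0 (bags M))]_(B <- bags M) pB B.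

(* while-loop condition:
   max{p(B) : B bag, |B| >= 2} > rho * min{p(B) : B bag} *)
Definition loop_cond (rho : R) (M : state) : Prop :=
  exists2 B, B \in bags M /\ (2 <= #|B|)%N &
  exists2 B', B' \in bags M & pB B > rho * pB B'.

(* LPT: jobs js (already in non-increasing order) are placed one by one into
   a currently least-loaded bag of bs; the final bags are out. *)
Inductive lpt_run : seq 'I_n -> seq {set 'I_n} -> seq {set 'I_n} -> Prop :=
| lpt_nil bs : lpt_run [::] bs bs
| lpt_cons j js bs k out :
    (k < size bs)%N ->
    (forall k', (k' < size bs)%N -> pB (nth set0 bs k) <= pB (nth set0 bs k')) ->
    lpt_run js (set_nth set0 bs k (j |: nth set0 bs k)) out ->
    lpt_run (j :: js) bs out.

(* out is a possible result of redistributing the jobs of pool into l bags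
   by LPT (ties broken arbitrarily) *)
Definition lpt (pool : {set 'I_n}) (l : nat) (out : seq {set 'I_n}) : Prop :=
  exists js, [/\ perm_eq js (enum pool),
                 sorted (fun a b => p b <= p a) js &
                 lpt_run js (nseq l set0) out].

Definition lpt_rebalance (M M' : state) : Prop :=
  exists (imin : 'I_m) (k : nat) (imax : 'I_m),
    let Bmin := nth set0 (M imin) k in
    [/\ (k < size (M imin))%N,
        (forall B, B \in bags M -> pB Bmin <= pB B),
        (exists2 B, B \in M imax /\ (2 <= #|B|)%N &
           forall B', B' \in bags M -> (2 <= #|B'|)%N -> pB B' <= pB B) &
        let M1 : state := fun i =>
          if i == imin then take k (M imin) ++ drop k.+1 (M imin) else M i in
        let Mmax := Bmin :: M1 imax in
        let pool := \bigcup_(B <- Mmax) B in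
        exists2 out, lpt pool (size Mmax) out &
          M' = fun i => if i == imax then out else M1 i].

(* A run of IPR for iterations 0..i: st k is the tentative assignment at the
   start of iteration k; each of the iterations 0..i was executed
   (loop condition held), and it did not return, i.e. the rebalanced
   assignment st k.+1 passed the (1+alpha) OPT_C test. *)
Definition ipr_no_return (alpha rho OPTC : R) (st : nat -> state) (i : nat) : Prop :=
  forall k, (k <= i)%N ->
    [/\ loop_cond rho (st k), lpt_rebalance (st k) (st k.+1) &
        state_makespan (st k.+1) <= (1 + alpha) * OPTC].

End IPR.

(* With unit jobs p(B) = |B|.  Rebalancing only redistributes the jobs of the
   bags it pools, so the bags of a tentative assignment stay pairwise disjoint.
   The pool consists of B_min and the other bags of M_max, all of size at least
   |B_min|, so by disjointness it holds at least l |B_min| jobs for l new bags.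
   LPT with unit jobs keeps all bag sizes within one of each other, hence every
   new bag receives at least |B_min| jobs, while every untouched bag already had
   at least |B_min|. *)

From HB Require Import structures.
From mathcomp Require Import all_boot all_order all_algebra zify.
Set Implicit Arguments.
Unset Strict Implicit.
Unset Printing Implicit Defensive.

Import Order.TTheory GRing.Theory Num.Theory.
Local Open Scope ring_scope.

Lemma perm_nth_take_drop (T : eqType) (x0 : T) (s : seq T) k : (k < size s)%N ->
  perm_eq s (nth x0 s k :: take k s ++ drop k.+1 s).
Proof.
move=> hk; rewrite -[X in perm_eq X](cat_take_drop k) (drop_nth x0 hk).
by rewrite -cat1s perm_catCA.
Qed.

Lemma perm_set_nth (T : eqType) (x0 : T) (s : seq T) k y : (k < size s)%N ->
  perm_eq (nth x0 s k :: set_nth x0 s k y) (y :: s).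
Proof.
move=> hk; apply/permP => a; move/permP/(_ a): (perm_nth_take_drop x0 hk).
rewrite set_nthE hk /= !count_cat /=; lia.
Qed.

Lemma sum_leq_size_mul (T : eqType) (r : seq T) (F : T -> nat) b :
  {in r, forall x, F x <= b}%N -> (\sum_(x <- r) F x <= size r * b)%N.
Proof.
move=> hF; rewrite -sum1_size big_distrl /= big_seq [leqRHS]big_seq.
by apply: leq_sum => x hx; rewrite mul1n hF.
Qed.

Lemma size_mul_leq_sum (T : eqType) (r : seq T) (F : T -> nat) b :
  {in r, forall x, b <= F x}%N -> (size r * b <= \sum_(x <- r) F x)%N.
Proof.
move=> hF; rewrite -sum1_size big_distrl /= big_seq [leqRHS]big_seq.
by apply: leq_sum => x hx; rewrite mul1n hF.
Qed.

Section Bags.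
Variables n m : nat.
Implicit Types (M : state n m) (bs : seq {set 'I_n}).

Lemma count_bags (a : pred {set 'I_n}) M :
  count a (bags M) = (\sum_i count a (M i))%N.
Proof. by rewrite /bags count_flatten sumnE !big_map -enumT big_enum. Qed.

Lemma perm_bags_update M i0 L :
  perm_eq (bags (fun i => if i == i0 then L else M i) ++ M i0) (bags M ++ L).
Proof.
apply/permP => a; rewrite !count_cat !count_bags (bigD1 i0) // [in RHS](bigD1 i0) //=.
rewrite eqxx (eq_bigr (fun i => count a (M i))) => [|i /negbTE-> //].
by rewrite addnAC [RHS]addnC addnA.
Qed.

Lemma perm_bags_remove M i k : (k < size (M i))%N ->
  perm_eq (nth set0 (M i) k ::
             bags (fun i' => if i' == i then take k (M i) ++ drop k.+1 (M i) else M i'))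
          (bags M).
Proof.
move=> hk; rewrite -(perm_cat2r (take k (M i) ++ drop k.+1 (M i))).
apply: perm_trans (perm_bags_update M i _); rewrite perm_sym.
rewrite (perm_catl _ (perm_nth_take_drop set0 hk)).
exact: permEl (perm_catCA _ [:: _] _).
Qed.

Definition disjoint_bags bs :=
  forall j : 'I_n, (count (fun B : {set 'I_n} => j \in B) bs <= 1)%N.

Lemma disjoint_bags_singletons (B : 'I_m -> {set 'I_n}) :
  (forall k k', k != k' -> [disjoint B k & B k']) ->
  disjoint_bags (bags (fun k => [:: B k])).
Proof.
move=> hdisj j; rewrite count_bags.
have [k0 hk0|hnone] := pickP (fun k => j \in B k); last first.
  by rewrite big1 // => k _; rewrite /= hnone.
rewrite (bigD1 k0) //= hk0 big1 // => k hk.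
by rewrite /= (disjointFr (hdisj k0 k _) hk0) // eq_sym.
Qed.

Lemma mem_bigcup_seq bs (j : 'I_n) :
  (j \in \bigcup_(B <- bs) B) = has (fun B : {set 'I_n} => j \in B) bs.
Proof. by elim: bs => [|B bs IH]; rewrite ?big_nil ?big_cons ?in_set0 ?in_setU ?IH. Qed.

Lemma card_bigcup_disjoint bs :
  disjoint_bags bs -> #|\bigcup_(B <- bs) B| = (\sum_(B <- bs) #|B|)%N.
Proof.
elim: bs => [|B bs IH] hdis; first by rewrite !big_nil cards0.
rewrite !big_cons -IH => [|j]; last by have := hdis j; rewrite /=; lia.
apply/eqP; rewrite (leq_card_setU _ _).2 disjoints_subset; apply/subsetP => j hB.
rewrite in_setC mem_bigcup_seq has_count -leqNgt; have := hdis j; rewrite /= hB; lia.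
Qed.

Lemma count_le_bags (a : pred {set 'I_n}) M i : (count a (M i) <= count a (bags M))%N.
Proof. by rewrite count_bags (bigD1 i) //= leq_addr. Qed.

End Bags.

Section Rebalance.
Variables (R : realFieldType) (n m : nat) (p : 'I_n -> R).
Implicit Types (M : state n m) (bs : seq {set 'I_n}).

Lemma bmin_le M X : X \in bags M -> bmin p M <= pB p X.
Proof. by move=> hX; apply: (ge_bigmin_seq _ _ xpredT (pB p) hX). Qed.

Lemma le_bmin M X0 c :
  X0 \in bags M -> {in bags M, forall X, c <= pB p X} -> c <= bmin p M.
Proof.
rewrite /bmin; case: (bags M) => [|Y bs]; first by rewrite in_nil.
by move=> _ hc; rewrite big_seq; apply: le_bigmin => [|X hX]; apply: hc; rewrite ?mem_head.
Qed.

Lemma lpt_run_size js bs out : lpt_run p js bs out -> size out = size bs.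
Proof. by elim=> // j js0 bs0 k out0 hk _ _ ->; rewrite size_set_nth; apply/maxn_idPr. Qed.

Lemma lpt_run_count js bs out (j : 'I_n) :
  let a := fun B : {set 'I_n} => j \in B in
  lpt_run p js bs out -> (count a out <= count a bs + count (pred1 j) js)%N.
Proof.
move=> a; elim=> [bs0|j0 js0 bs0 k out0 hk _ _ IH] /=; first by rewrite addn0.
move/permP/(_ a): (perm_set_nth set0 (j0 |: nth set0 bs0 k) hk) IH.
rewrite /= /a in_setU1 eq_sym; case: (j0 == j); case: (j \in nth set0 bs0 k) => /=; lia.
Qed.

Lemma lpt_count_le pool l out (j : 'I_n) :
  lpt p pool l out -> (count (fun B : {set 'I_n} => j \in B) out <= (j \in pool))%N.
Proof.
case=> js [hperm _ hrun]; apply: leq_trans (lpt_run_count j hrun) _.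
by rewrite count_nseq in_set0 mul0n (permP hperm) count_uniq_mem ?enum_uniq ?mem_enum.
Qed.

Lemma lpt_rebalance_bags M M' : lpt_rebalance p M M' ->
  exists Bmin Mmax out,
    [/\ Bmin \in Mmax, {in bags M, forall B, pB p Bmin <= pB p B},
         forall a, (count a Mmax <= count a (bags M))%N,
         lpt p (\bigcup_(B <- Mmax) B) (size Mmax) out &
         perm_eq (bags M' ++ Mmax) (bags M ++ out)].
Proof.
move=> [imin [k [imax [hk hmin _ [out hlpt eM']]]]].
set Bmin := nth set0 (M imin) k in hmin hlpt eM' *.
pose M1 : state n m :=
  fun i => if i == imin then take k (M imin) ++ drop k.+1 (M imin) else M i.
have hM1 a : (count a (bags M1) + a Bmin = count a (bags M))%N.
  by rewrite -(permP (perm_bags_remove hk) a) /= addnC.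
have hM' : perm_eq (bags M' ++ M1 imax) (bags M1 ++ out).
  by rewrite eM'; apply: perm_bags_update.
exists Bmin, (Bmin :: M1 imax), out; split => //; first exact: mem_head.
- move=> a /=; have := count_le_bags a M1 imax; have := hM1 a; lia.
- apply/permP => a; have := permP hM' a; have := hM1 a; rewrite !count_cat /=; lia.
Qed.

Lemma lpt_rebalance_disjoint M M' :
  lpt_rebalance p M M' -> disjoint_bags (bags M) -> disjoint_bags (bags M').
Proof.
case/lpt_rebalance_bags => Bmin [Mmax [out [_ _ _ hlpt hperm]]] hdis j.
set a := fun B : {set 'I_n} => j \in B.
have hout : (count a out <= count a Mmax)%N.
  by apply: leq_trans (lpt_count_le j hlpt) _; rewrite mem_bigcup_seq has_count; case: count.
move/permP/(_ a): hperm; rewrite !count_cat => e.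
by rewrite -(leq_add2r (count a Mmax)) e; apply: leq_add (hdis j) hout.
Qed.

End Rebalance.

Section Balanced.
Variable n : nat.
Implicit Types (bs : seq {set 'I_n}) (X Y Z : {set 'I_n}).

Definition balanced bs := {in bs &, forall X Y : {set 'I_n}, #|X| <= #|Y|.+1}%N.

Lemma balanced_cons_min bs Z (Z' : {set 'I_n}) :
  balanced bs -> Z \in bs -> {in bs, forall Y, #|Z| <= #|Y|}%N ->
  #|Z'| = #|Z|.+1 -> balanced (Z' :: bs).
Proof.
move=> hbal hZ hmin hZ' X Y; rewrite !in_cons => /predU1P[->|hX] /predU1P[->|hY].
- exact: leqnSn.
- by rewrite hZ' ltnS hmin.
- by rewrite hZ' (leq_trans (hbal _ _ hX hZ)).
- exact: hbal.
Qed.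

Lemma balanced_card_ge bs X b : balanced bs -> X \in bs ->
  (size bs * b <= \sum_(Y <- bs) #|Y|)%N -> (b <= #|X|)%N.
Proof.
move=> hbal hX hsum.
have hlt : (\sum_(Y <- bs) #|Y| < size bs * #|X|.+1)%N.
  rewrite (perm_big _ (perm_to_rem hX)) (perm_size (perm_to_rem hX)) big_cons /=.
  rewrite mulSn addSn ltnS leq_add2l sum_leq_size_mul // => Y hY.
  exact: hbal (mem_rem hY) hX.
by move: (leq_ltn_trans hsum hlt); rewrite ltn_mul2l ltnS => /andP[].
Qed.

End Balanced.

Section UnitJobs.
Variables (R : realFieldType) (n m : nat) (p : 'I_n -> R).
Hypothesis unit_p : forall j, p j = 1.
Implicit Types (M : state n m) (bs : seq {set 'I_n}) (X : {set 'I_n}).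

Lemma pB_card X : pB p X = #|X|%:R.
Proof. by rewrite /pB (eq_bigr (fun _ => 1)) ?sumr_const. Qed.

Lemma lpt_run_balanced js bs out : lpt_run p js bs out -> uniq js ->
  {in js, forall j, {in bs, forall B : {set 'I_n}, j \notin B}} -> balanced bs ->
  balanced out /\ (\sum_(B <- out) #|B| = \sum_(B <- bs) #|B| + size js)%N.
Proof.
elim=> [bs0 _ _ hbal|j0 js0 bs0 k out0 hk hmin _ IH]; first by rewrite addn0.
move=> /andP[hj0 hu] hfresh hbal.
set Z := nth set0 bs0 k; set Z' := j0 |: Z.
have hZ : Z \in bs0 := mem_nth set0 hk.
have hperm := perm_set_nth set0 Z' hk.
have hZ' : #|Z'| = #|Z|.+1 by rewrite cardsU1 hfresh ?mem_head.
have hZmin : {in bs0, forall Y : {set 'I_n}, #|Z| <= #|Y|}%N.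
  move=> Y hY; rewrite -(nth_index set0 hY) -(@ler_nat R) -!pB_card.
  by apply: hmin; rewrite index_mem.
have hsub : {subset set_nth set0 bs0 k Z' <= Z' :: bs0}.
  by move=> Y hY; rewrite -(perm_mem hperm) in_cons hY orbT.
have [||hbal' ->] := IH hu.
- move=> j hj Y /hsub; rewrite in_cons => /predU1P[->|hY]; last first.
    by apply: hfresh hY; rewrite in_cons hj orbT.
  by rewrite in_setU1 negb_or (memPn hj0 _ hj) hfresh // in_cons hj orbT.
- by move=> X Y /hsub hX /hsub hY; apply: balanced_cons_min hbal hZ hZmin hZ' X Y hX hY.
have e : (\sum_(B <- Z :: set_nth set0 bs0 k Z') #|B| = \sum_(B <- Z' :: bs0) #|B|)%N.
  exact: perm_big.
split=> //; move: e; rewrite !big_cons hZ' -/Z -/Z' addSn -addnS => /addnI ->.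
by rewrite addSnnS.
Qed.

Lemma lpt_card_ge pool l out X b : lpt p pool l out ->
  (l * b <= #|pool|)%N -> X \in out -> (b <= #|X|)%N.
Proof.
case=> js [hperm _ hrun] hb hX.
have hempty : {in nseq l set0, forall B : {set 'I_n}, B = set0}.
  by move=> B; rewrite mem_nseq => /andP[_ /eqP].
have [|||hbal hsum] := lpt_run_balanced hrun.
- by rewrite (perm_uniq hperm) enum_uniq.
- by move=> j _ B /hempty ->; rewrite in_set0.
- by move=> B C /hempty -> /hempty ->; rewrite cards0.
apply: balanced_card_ge hbal hX _.
rewrite hsum (lpt_run_size hrun) size_nseq (perm_size hperm) -cardE big1_seq ?add0n //.
by move=> B /andP[_ /hempty ->]; rewrite cards0.
Qed.

Lemma lpt_rebalance_bmin M M' X : lpt_rebalance p M M' ->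
  disjoint_bags (bags M) -> X \in bags M' -> bmin p M <= pB p X.
Proof.
case/lpt_rebalance_bags => Bmin [Mmax [out [hBmin hmin hsub hlpt hperm]]] hdis hX.
have hMmax : {subset Mmax <= bags M}.
  move=> Y hY; rewrite -has_pred1 has_count (leq_trans _ (hsub _)) //.
  by rewrite -has_count has_pred1.
have : X \in bags M ++ out by rewrite -(perm_mem hperm) mem_cat hX.
rewrite mem_cat => /orP[/bmin_le //|hXout].
apply: le_trans (bmin_le p (hMmax _ hBmin)) _.
rewrite !pB_card ler_nat; apply: lpt_card_ge hlpt _ hXout.
rewrite card_bigcup_disjoint => [|j]; last exact: leq_trans (hsub _) (hdis j).
apply: size_mul_leq_sum => Y hY.
by rewrite -(@ler_nat R) -!pB_card hmin ?hMmax.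
Qed.

End UnitJobs.

Theorem lemma10 (R : realFieldType) (n m : nat)
  (p : 'I_n -> R) (s : 'I_m -> R) (alpha eps : R)
  (B : 'I_m -> {set 'I_n}) (st : nat -> state n m) (i : nat) :
  (* unit processing times *)
  (forall j, p j = 1) ->
  (* predicted speeds: positive, non-increasing *)
  (forall k, 0 < s k) ->
  (forall k k' : 'I_m, (k <= k')%N -> s k' <= s k) ->
  0 < alpha < 1 -> 0 < eps < 1 ->
  (* step (1): B is a partition with p(B_1) >= ... >= p(B_m) and
     makespan at most (1+eps) opt(p, s) *)
  (forall j, exists k, j \in B k) ->
  (forall k k', k != k' -> [disjoint B k & B k']) ->
  (forall k k' : 'I_m, (k <= k')%N -> pB p (B k') <= pB p (B k)) ->
  (forall f : {ffun 'I_n -> 'I_m},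
     \big[Num.max/0]_(k : 'I_m) (pB p (B k) / s k)
       <= (1 + eps) * assign_makespan p s f) ->
  (* step (2): initial tentative assignment *)
  st 0%N = (fun k => [:: B k]) ->
  (* iterations 0..i executed without returning (rho = 2) ... *)
  ipr_no_return p s alpha 2
    (\big[Num.max/0]_(k : 'I_m) (pB p (B k) / s k)) st i ->
  (* ... and iteration i+1 is executed *)
  loop_cond p 2 (st i.+1) ->
  bmin p (st i) <= bmin p (st i.+1).
Proof.
move=> unit_p _ _ _ _ _ hdisj _ _ hst0 hrun [X [hX _] _].
have hdis k : (k <= i)%N -> disjoint_bags (bags (st k)).
  elim: k => [_|k IH hk]; first by rewrite hst0; exact: disjoint_bags_singletons.
  by have [_ hreb _] := hrun k (ltnW hk); apply: lpt_rebalance_disjoint hreb (IH (ltnW hk)).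
have [_ hreb _] := hrun i (leqnn i).
apply: le_bmin hX _ => Y; apply: (lpt_rebalance_bmin unit_p hreb).
exact: hdis.
Qed.
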